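(* Let $\rho$ be a density matrix on $\mathbb{C}^d$ and $H$ a Hermitian operator on $\mathbb{C}^d$, with $F_Q>0$. Then for all $n=1,2,\dots$, $$\frac{\left|B_n^{(\mathsf{Kry})}-F_Q\right|}{F_Q}\le\frac{\left|B_{2n-1}^{(\mathsf{Tay})}-F_Q\right|}{F_Q}.$$
   Context: Write $\rho=\sum_k p_k|k\rangle\langle k|$ (spectral decomposition). The quantum Fisher information is $F_Q=2\sum_{k,l:\,p_k+p_l>0}\frac{(p_k-p_l)^2}{p_k+p_l}|\langle k|H|l\rangle|^2$. Let $\mathcal{X}$ be the real space of Hermitian operators $X$ with $\langle k|X|l\rangle=0$ whenever $p_k=p_l=0$, with inner product $\langle X,Y\rangle_\rho=\mathrm{tr}[\rho(XY+YX)/2]$ and norm $\|X\|_\rho=\sqrt{\langle X,X\rangle_\rho}$. Let $\mathcal{R}_\rho(X)=\frac12(\rho X+X\rho)$ and let $L\in\mathcal{X}$ be the unique solution of $\mathcal{R}_\rho(L)=i[\rho,H]$ (the SLD; $F_Q=\|L\|_\rho^2$). Let $\mathcal{K}_n=\mathrm{span}\{\mathcal{R}_\rho^{k}(i[\rho,H]):k=0,\dots,n-1\}$, let $L_n$ be the $\langle\cdot,\cdot\rangle_\rho$-orthogonal projection of $L$ onto $\mathcal{K}_n$, and $B_n^{(\mathsf{Kry})}=\|L_n\|_\rho^2$ (the $n$-th Krylov bound). The $m$-th Taylor bound is $$B_m^{(\mathsf{Tay})}=2\,\mathrm{tr}\Big(\sum_{l=0}^{m}(\rho\otimes\mathbb{1}-\mathbb{1}\otimes\rho)^2(\mathbb{1}\otimes\mathbb{1}-\rho\otimes\mathbb{1}-\mathbb{1}\otimes\rho)^l\,S\,(H\otimes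 H)\Big),$$ where $\mathbb{1}$ is the identity on $\mathbb{C}^d$ and $S$ is the swap operator on $\mathbb{C}^d\otimes\mathbb{C}^d$. *)

(* Complex numbers: an arbitrary numClosedFieldType C
   (e.g. complex R for a real-closed / real field R). *)
From HB Require Import structures.
From mathcomp Require Import all_boot all_order all_algebra.
From mathcomp Require Import sesquilinear spectral mxtens.
Set Implicit Arguments. Unset Strict Implicit. Unset Printing Implicit Defensive.
Import Order.TTheory GRing.Theory Num.Theory.
Local Open Scope ring_scope.
Local Open Scope sesquilinear_scope.

Section QFI.
Variables (C : numClosedFieldType) (d : nat).

Definition adjmx (A : 'M[C]_d) : 'M[C]_d := A ^t*.

Definition density_matrix (rho : 'M[C]_d) : Prop :=
  rho \is hermsymmx /\
  (forall v : 'rV[C]_d, 0 <= (v *m rho *m v ^t*) 0 0) /\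
  \tr rho = 1.

Definition is_hermitian (A : 'M[C]_d) : Prop := A \is hermsymmx.

(* Spectral decomposition rho = sum_k p_k |k><k| : the rows of the unitary U
   are the bras <k|, p_k are real (the eigenvalues). *)
Definition spectral_decomposition (rho U : 'M[C]_d) (p : 'I_d -> C) : Prop :=
  U \is unitarymx /\ (forall k, p k \is Num.real) /\
  rho = U ^t* *m diag_mx (\row_k p k) *m U.

Definition mel (U X : 'M[C]_d) (k l : 'I_d) : C := (U *m X *m U ^t*) k l.

Definition FQ (U : 'M[C]_d) (p : 'I_d -> C) (H : 'M[C]_d) : C :=
  2 * \sum_(k < d) \sum_(l < d | 0 < p k + p l)
        ((p k - p l) ^+ 2 / (p k + p l) * `|mel U H k l| ^+ 2).

Definition inX (U : 'M[C]_d) (p : 'I_d -> C) (X : 'M[C]_d) : Prop :=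
  is_hermitian X /\ (forall k l, p k = 0 -> p l = 0 -> mel U X k l = 0).

Definition ipr (rho X Y : 'M[C]_d) : C := \tr (rho *m (X *m Y + Y *m X)) / 2.

Definition Rop (rho X : 'M[C]_d) : 'M[C]_d := 2^-1 *: (rho *m X + X *m rho).

Definition icomm (rho H : 'M[C]_d) : 'M[C]_d := 'i *: (rho *m H - H *m rho).

Definition is_SLD (U : 'M[C]_d) (p : 'I_d -> C) (rho H L : 'M[C]_d) : Prop :=
  inX U p L /\ Rop rho L = icomm rho H.

Definition inKrylov (n : nat) (rho H Y : 'M[C]_d) : Prop :=
  exists c : 'I_n -> C, (forall k, c k \is Num.real) /\
    Y = \sum_(k < n) c k *: iter k (Rop rho) (icomm rho H).

Definition is_Krylov_proj (n : nat) (rho H L Ln : 'M[C]_d) : Prop :=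
  inKrylov n rho H Ln /\
  forall Y, inKrylov n rho H Y -> ipr rho (L - Ln) Y = 0.

Definition BKry (rho Ln : 'M[C]_d) : C := ipr rho Ln Ln.

(* powers of a (not necessarily nonempty-indexed) square matrix *)
Definition mxpow (m : nat) (A : 'M[C]_m) (l : nat) : 'M[C]_m :=
  iter l (mulmx A) 1%:M.

Definition swapmx : 'M[C]_(d * d) :=
  \sum_(a < d) \sum_(b < d) (delta_mx a b *t delta_mx b a).

Definition BTay (rho H : 'M[C]_d) (m : nat) : C :=
  let I := (1%:M : 'M[C]_d) in
  let A := rho *t I - I *t rho in
  let B := (1%:M : 'M[C]_(d * d)) - rho *t I - I *t rho in
  2 * \tr (\sum_(l < m.+1)
             (A *m A *m mxpow B l *m swapmx *m (H *t H))).

End QFI.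

From HB Require Import structures.
From mathcomp Require Import all_boot all_order all_algebra.
From mathcomp Require Import sesquilinear spectral mxtens.
From mathcomp Require Import ring.
Set Implicit Arguments. Unset Strict Implicit. Unset Printing Implicit Defensive.
Import Order.TTheory GRing.Theory Num.Theory.
Local Open Scope ring_scope.
Local Open Scope sesquilinear_scope.

(* Let T X := X - rho X - X rho = X - 2 R_rho(X). Since R_rho(L) = i[rho,H],
   L - T L = 2 i[rho,H], hence L - T^n L = 2 \sum_(m < n) T^m(i[rho,H]) lies
   in K_n. In the eigenbasis of rho, R_rho and T multiply the (k,l) entry by
   (p_k + p_l)/2 and 1 - p_k - p_l, so summing a geometric series gives
   F_Q - B_(2n-1)^Tay = ||T^n L||^2. On the other hand F_Q - B_n^Kry = ||L - L_n||^2,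
   and by Pythagoras in the Krylov space
   ||T^n L||^2 = ||L - L_n||^2 + ||L_n - (L - T^n L)||^2. Both bounds thus lie
   below F_Q, the Krylov one closer. *)

Lemma trmxC_scale_real (C : numClosedFieldType) n a (X : 'M[C]_n) :
  a \is Num.real -> (a *: X)^t* = a *: X^t*.
Proof. by move=> aR; rewrite linearZ /= map_mxZ; congr (_ *: _); exact: conj_Creal. Qed.

Lemma hermsymmx_selfadj (C : numClosedFieldType) n (A : 'M[C]_n) :
  A \is hermsymmx -> A^t* = A.
Proof. by move/is_hermitianmxP; rewrite expr0 scale1r => {2}->. Qed.

Lemma selfadj_entry (C : numClosedFieldType) n (A : 'M[C]_n) k l :
  A^t* = A -> A l k = (A k l)^*.
Proof. by move=> AE; rewrite -{1}AE !mxE. Qed.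

(* The operator 1 - rho (x) 1 - 1 (x) rho of the Taylor bound, acting on matrices. *)
Definition Bop (C : numClosedFieldType) n (rho X : 'M[C]_n) : 'M[C]_n :=
  X - 2 *: Rop rho X.

Section UnitaryConjugation.
Variables (C : numClosedFieldType) (n : nat) (V : 'M[C]_n).

Definition uconj (X : 'M[C]_n) : 'M[C]_n := V *m X *m V^t*.

Lemma trmxC_uconj X : (uconj X)^t* = uconj (X^t*).
Proof. by rewrite /uconj !trmx_mul !map_mxM trmxCK mulmxA. Qed.

Lemma uconj_selfadj X : X^t* = X -> (uconj X)^t* = uconj X.
Proof. by rewrite trmxC_uconj => ->. Qed.

Lemma uconjD X Y : uconj (X + Y) = uconj X + uconj Y.
Proof. by rewrite /uconj mulmxDr mulmxDl. Qed.

Lemma uconjB X Y : uconj (X - Y) = uconj X - uconj Y.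
Proof. by rewrite /uconj mulmxBr mulmxBl. Qed.

Lemma uconjZ c X : uconj (c *: X) = c *: uconj X.
Proof. by rewrite /uconj -scalemxAr -scalemxAl. Qed.

Lemma uconj_sum m (F : 'I_m -> 'M[C]_n) :
  uconj (\sum_(i < m) F i) = \sum_(i < m) uconj (F i).
Proof. by rewrite /uconj mulmx_sumr mulmx_suml. Qed.

Hypothesis unitaryV : V \is unitarymx.

Lemma trmxC_mul_unitary : V^t* *m V = 1%:M.
Proof. exact/mulmx1C/unitarymxP. Qed.

Lemma uconj1 : uconj 1%:M = 1%:M.
Proof. by rewrite /uconj mulmx1; apply/unitarymxP. Qed.

Lemma uconjM X Y : uconj (X *m Y) = uconj X *m uconj Y.
Proof.
by rewrite /uconj !mulmxA -[V *m X *m V^t* *m V]mulmxA trmxC_mul_unitary mulmx1.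
Qed.

Lemma uconj_mxpow X l : uconj (mxpow X l) = mxpow (uconj X) l.
Proof. by elim: l => [|l IH] /=; rewrite ?uconj1 // uconjM IH. Qed.

Lemma mxtrace_uconj X : \tr (uconj X) = \tr X.
Proof. by rewrite /uconj mxtrace_mulC mulmxA trmxC_mul_unitary mul1mx. Qed.

Lemma uconj_ipr rho X Y : ipr (uconj rho) (uconj X) (uconj Y) = ipr rho X Y.
Proof. by rewrite /ipr -!uconjM -uconjD -uconjM mxtrace_uconj. Qed.

Lemma uconj_Rop rho X : uconj (Rop rho X) = Rop (uconj rho) (uconj X).
Proof. by rewrite /Rop uconjZ uconjD !uconjM. Qed.

Lemma uconj_icomm rho H : uconj (icomm rho H) = icomm (uconj rho) (uconj H).
Proof. by rewrite /icomm uconjZ uconjB !uconjM. Qed.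

Lemma uconj_iter_Bop rho X m :
  uconj (iter m (Bop rho) X) = iter m (Bop (uconj rho)) (uconj X).
Proof. by elim: m => //= m <-; rewrite /Bop uconjB uconjZ uconj_Rop. Qed.

End UnitaryConjugation.

Lemma big_mxtens_index (V : nmodType) m n (F : 'I_(m * n) -> V) :
  \sum_i F i = \sum_(a < m) \sum_(b < n) F (mxtens_index (a, b)).
Proof.
rewrite pair_big /= (reindex (@mxtens_index m n)) /=.
  by apply: eq_bigr => [[a b]].
by exists (@mxtens_unindex m n) => i _; rewrite (mxtens_indexK, mxtens_unindexK).
Qed.

Lemma eq_mxtens_index m n (a c : 'I_m) (b e : 'I_n) :
  (mxtens_index (a, b) == mxtens_index (c, e)) = (a == c) && (b == e).
Proof. by rewrite (can_eq (@mxtens_indexK m n)) xpair_eqE. Qed.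

Lemma sum_delta_natl (R : pzSemiRingType) (I : finType) (i0 : I) (F : I -> R) :
  \sum_i (i == i0)%:R * F i = F i0.
Proof.
under eq_bigr do rewrite mulr_natl mulrb.
by rewrite -big_mkcond big_pred1_eq.
Qed.

Lemma tensmx_diag (R : comPzRingType) m n (a : 'rV[R]_m) (b : 'rV[R]_n) :
  diag_mx a *t diag_mx b =
    diag_mx (\row_i (a 0 (mxtens_unindex i).1 * b 0 (mxtens_unindex i).2)).
Proof.
apply/matrixP => i j; case: (mxtens_indexP i) => x y; case: (mxtens_indexP j) => z t.
rewrite tensmxE !mxE eq_mxtens_index mxtens_indexK /=.
by case: (x == z); case: (y == t); rewrite ?mulr0n ?mulr1n ?mulr0 ?mul0r.
Qed.

Lemma tensmx11 (R : comPzRingType) m n :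
  (1%:M : 'M[R]_m) *t (1%:M : 'M[R]_n) = 1%:M.
Proof.
rewrite -!diag_const_mx tensmx_diag; congr diag_mx.
by apply/rowP => i; rewrite !mxE mulr1.
Qed.

Lemma trmxC_tens (C : numClosedFieldType) m n p q
    (A : 'M[C]_(m, n)) (B : 'M[C]_(p, q)) :
  (A *t B)^t* = A^t* *t B^t*.
Proof. by rewrite trmx_tens map_mxT. Qed.

Lemma tens_unitarymx (C : numClosedFieldType) m n (A : 'M[C]_m) (B : 'M[C]_n) :
  A \is unitarymx -> B \is unitarymx -> A *t B \is unitarymx.
Proof.
move=> /unitarymxP uA /unitarymxP uB; apply/unitarymxP.
by rewrite trmxC_tens tensmx_mul uA uB tensmx11.
Qed.

Lemma uconj_tens (C : numClosedFieldType) m n (V : 'M[C]_m) (W : 'M[C]_n) A B :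
  uconj (V *t W) (A *t B) = uconj V A *t uconj W B.
Proof. by rewrite /uconj trmxC_tens !tensmx_mul. Qed.

Section Swap.
Variables (C : numClosedFieldType) (d : nat).
Local Notation S := (swapmx C d).

Lemma swapmxE a b c e :
  S (mxtens_index (a, b)) (mxtens_index (c, e)) = ((a == e) && (b == c))%:R.
Proof.
rewrite /swapmx summxE.
under eq_bigr => x _ do rewrite summxE.
under eq_bigr => x _ do under eq_bigr => y _ do rewrite tensmxE !mxE.
rewrite (bigD1 a) //= (bigD1 c) //= !eqxx mul1r.
rewrite [X in _ + X + _]big1 => [|y /negbTE cy]; last by rewrite eq_sym cy mul0r.
rewrite [X in _ + X]big1 => [|x /negbTE ax]; last first.
  by apply: big1 => y _; rewrite eq_sym ax mul0r.
by rewrite !addr0 andbC [e == a]eq_sym.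
Qed.

Lemma mul_swapmxE m (M : 'M[C]_(d * d, m)) a b j :
  (S *m M) (mxtens_index (a, b)) j = M (mxtens_index (b, a)) j.
Proof.
rewrite -(sum_delta_natl _ (M^~ j)) mxE !big_mxtens_index.
apply: eq_bigr => x _; apply: eq_bigr => y _.
by rewrite swapmxE eq_mxtens_index andbC [a == y]eq_sym [b == x]eq_sym.
Qed.

Lemma mul_mx_swapE m (M : 'M[C]_(m, d * d)) i c e :
  (M *m S) i (mxtens_index (c, e)) = M i (mxtens_index (e, c)).
Proof.
rewrite -(sum_delta_natl _ (M i)) mxE !big_mxtens_index.
apply: eq_bigr => x _; apply: eq_bigr => y _.
by rewrite swapmxE eq_mxtens_index mulrC.
Qed.

Lemma swapmx_tens (A B : 'M[C]_d) : S *m (A *t B) = (B *t A) *m S.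
Proof.
apply/matrixP => i j; case: (mxtens_indexP i) => a b; case: (mxtens_indexP j) => c e.
by rewrite mul_swapmxE mul_mx_swapE !tensmxE mulrC.
Qed.

Lemma uconj_swapmx (V : 'M[C]_d) : V \is unitarymx -> uconj (V *t V) S = S.
Proof.
move=> uV; rewrite /uconj -swapmx_tens -mulmxA.
by rewrite (unitarymxP (tens_unitarymx uV uV)) mulmx1.
Qed.

Lemma mxtrace_diag_swap_tens (g : 'rV[C]_(d * d)) (A B : 'M[C]_d) :
  \tr (diag_mx g *m S *m (A *t B)) =
    \sum_a \sum_b g 0 (mxtens_index (a, b)) * (A b a * B a b).
Proof.
rewrite /mxtrace big_mxtens_index; apply: eq_bigr => a _; apply: eq_bigr => b _.
by rewrite -mulmxA mul_diag_mx mxE mul_swapmxE tensmxE.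
Qed.

End Swap.

Lemma mxpow_diag (C : numClosedFieldType) m (g : 'rV[C]_m) l :
  mxpow (diag_mx g) l = diag_mx (\row_i (g 0 i ^+ l)).
Proof.
elim: l => [|l IH] /=.
  by rewrite -diag_const_mx; congr diag_mx; apply/rowP => i; rewrite !mxE.
by rewrite IH mulmx_diag; congr diag_mx; apply/rowP => i; rewrite !mxE exprS.
Qed.

Section TaylorBound.
Variables (C : numClosedFieldType) (d : nat).

Lemma BTay_uconj (V rho H : 'M[C]_d) m : V \is unitarymx ->
  BTay (uconj V rho) (uconj V H) m = BTay rho H m.
Proof.
move=> uV; have uW := tens_unitarymx uV uV.
have tens1 X : uconj V X *t 1%:M = uconj (V *t V) (X *t 1%:M).
  by rewrite uconj_tens uconj1.
have tens1' X : 1%:M *t uconj V X = uconj (V *t V) (1%:M *t X).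
  by rewrite uconj_tens uconj1.
rewrite /BTay; congr (_ * _).
rewrite tens1 tens1' -uconj_tens -{1}(uconj1 uW) -{1}(uconj_swapmx uV) -!uconjB.
under eq_bigr => l _ do rewrite -(uconj_mxpow uW) -!(uconjM uW).
by rewrite -uconj_sum mxtrace_uconj.
Qed.

Lemma BTay_diag (p : 'I_d -> C) (H : 'M[C]_d) m :
  BTay (diag_mx (\row_k p k)) H m =
    2 * \sum_a \sum_b ((p a - p b) ^+ 2 * (\sum_(l < m.+1) (1 - p a - p b) ^+ l)
                        * (H b a * H a b)).
Proof.
pose pi1 := \row_i p (@mxtens_unindex d d i).1.
pose pi2 := \row_i p (@mxtens_unindex d d i).2.
have rho1 : diag_mx (\row_k p k) *t 1%:M = diag_mx pi1.
  rewrite -diag_const_mx tensmx_diag; congr diag_mx.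
  by apply/rowP => i; rewrite !mxE mulr1.
have rho2 : 1%:M *t diag_mx (\row_k p k) = diag_mx pi2.
  rewrite -diag_const_mx tensmx_diag; congr diag_mx.
  by apply/rowP => i; rewrite !mxE mul1r.
rewrite /BTay rho1 rho2 -diag_const_mx -!raddfB /=.
under eq_bigr do rewrite mxpow_diag !mulmx_diag.
rewrite -!mulmx_suml -raddf_sum mxtrace_diag_swap_tens; congr (_ * _).
apply: eq_bigr => a _; apply: eq_bigr => b _; congr (_ * _).
rewrite summxE mulr_sumr; apply: eq_bigr => l _.
by rewrite !mxE mxtens_indexK.
Qed.

End TaylorBound.

Section DiagonalState.
Variables (C : numClosedFieldType) (d : nat) (p : 'I_d -> C).
Local Notation D := (diag_mx (\row_k p k)).

Lemma Rop_diagE X k l : Rop D X k l = (p k + p l) / 2 * X k l.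
Proof. by rewrite /Rop mul_diag_mx mul_mx_diag !mxE; ring. Qed.

Lemma icomm_diagE X k l : icomm D X k l = 'i * (p k - p l) * X k l.
Proof. by rewrite /icomm mul_diag_mx mul_mx_diag !mxE; ring. Qed.

Lemma Bop_diagE X k l : Bop D X k l = (1 - p k - p l) * X k l.
Proof. by rewrite /Bop 3!mxE Rop_diagE; field. Qed.

Lemma iter_Bop_diagE m X k l :
  iter m (Bop D) X k l = (1 - p k - p l) ^+ m * X k l.
Proof.
elim: m => [|m IH] /=; first by rewrite mul1r.
by rewrite Bop_diagE IH exprS mulrA.
Qed.

Lemma ipr_diagE X Y :
  ipr D X Y = \sum_k \sum_l (p k + p l) / 2 * (X k l * Y l k).
Proof.
have trE (A B : 'M[C]_d) :
    \tr (D *m (A *m B)) = \sum_k \sum_l p k * (A k l * B l k).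
  by apply: eq_bigr => k _; rewrite mul_diag_mx !mxE mulr_sumr.
rewrite /ipr mulmxDr mxtraceD !trE [X in _ + X]exchange_big -big_split mulr_suml.
apply: eq_bigr => k _; rewrite -big_split mulr_suml; apply: eq_bigr => l _ /=.
by rewrite [Y l k * _]mulrC; ring.
Qed.

End DiagonalState.

Section Krylov.
Variables (C : numClosedFieldType) (d : nat) (rho H : 'M[C]_d).
Local Notation K m := (inKrylov m rho H).
Local Notation G := (icomm rho H).
Local Notation R := (Rop rho).
Local Notation T := (Bop rho).

Lemma RopD X Y : R (X + Y) = R X + R Y.
Proof. by rewrite /Rop mulmxDr mulmxDl addrACA scalerDr. Qed.

Lemma RopZ c X : R (c *: X) = c *: R X.
Proof. by rewrite /Rop -scalemxAr -scalemxAl -scalerDr !scalerA mulrC. Qed.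

Lemma Rop_sum m (F : 'I_m -> 'M[C]_d) : R (\sum_(k < m) F k) = \sum_(k < m) R (F k).
Proof. by apply: (big_morph _ RopD); rewrite /Rop mulmx0 mul0mx addr0 scaler0. Qed.

Lemma inKrylov0 m : K m 0.
Proof.
exists (fun=> 0); split=> [k|]; first exact: rpred0.
by rewrite big1 // => k _; rewrite scale0r.
Qed.

Lemma inKrylovD m X Y : K m X -> K m Y -> K m (X + Y).
Proof.
move=> [c [cR ->]] [e [eR ->]]; exists (fun k => c k + e k); split=> [k|].
  by rewrite rpredD.
by rewrite -big_split /=; apply: eq_bigr => k _; rewrite scalerDl.
Qed.

Lemma inKrylovZ m a X : a \is Num.real -> K m X -> K m (a *: X).
Proof.
move=> aR [c [cR ->]]; exists (fun k => a * c k); split=> [k|].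
  by rewrite rpredM.
by rewrite scaler_sumr; apply: eq_bigr => k _; rewrite scalerA.
Qed.

Lemma inKrylovB m X Y : K m X -> K m Y -> K m (X - Y).
Proof.
move=> KX KY; rewrite -scaleN1r; apply: inKrylovD => //.
exact: inKrylovZ (rpredN1 _) KY.
Qed.

Lemma inKrylov_le m m' X : (m <= m')%N -> K m X -> K m' X.
Proof.
move=> le_mm' [c [cR ->]].
pose c' (k : nat) := if insub k is Some j then c j else 0.
exists (fun k : 'I_m' => c' k); split=> [k|].
  by rewrite /c'; case: insub => [j|]; rewrite ?cR ?rpred0.
transitivity (\sum_(k < m) c' k *: iter k R G).
  by apply: eq_bigr => k _; rewrite /c' valK.
rewrite (big_ord_widen m' (fun k => c' k *: iter k R G)) // big_mkcond /=.
apply: eq_bigr => k _; case: ifP => // km.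
by rewrite /c' insubF // scale0r.
Qed.

Lemma inKrylov_Rop m X : K m X -> K m.+1 (R X).
Proof.
move=> [c [cR ->]].
exists (fun i : 'I_m.+1 => if unlift ord0 i is Some j then c j else 0).
split=> [i|]; first by case: unlift => [j|]; rewrite ?cR ?rpred0.
rewrite big_ord_recl /= unlift_none scale0r add0r Rop_sum.
by apply: eq_bigr => j _; rewrite liftK RopZ.
Qed.

Lemma iter_BopD m X Y : iter m T (X + Y) = iter m T X + iter m T Y.
Proof. by elim: m => //= m ->; rewrite /Bop RopD scalerDr opprD addrACA. Qed.

Lemma iter_BopZ m c X : iter m T (c *: X) = c *: iter m T X.
Proof. by elim: m => //= m ->; rewrite /Bop RopZ scalerBr scalerA mulrC -scalerA. Qed.

Lemma iter_BopB m X Y : iter m T (X - Y) = iter m T X - iter m T Y.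
Proof. by rewrite -scaleN1r iter_BopD iter_BopZ scaleN1r. Qed.

Lemma inKrylov_iter_Bop m : K m.+1 (iter m T G).
Proof.
elim: m => [|m IH] /=.
  exists (fun=> 1); split=> [k|]; first exact: rpred1.
  by rewrite big_ord1 scale1r.
rewrite /Bop; apply: inKrylovB; first exact: inKrylov_le IH.
by apply: inKrylovZ; [exact: realn | exact: inKrylov_Rop].
Qed.

Lemma SLD_sub_iter_Bop L n : R L = G ->
  L - iter n T L = 2 *: \sum_(m < n) iter m T G.
Proof.
move=> RL; elim: n => [|n IH]; first by rewrite subrr big_ord0 scaler0.
rewrite big_ord_recr /= scalerDr -IH -iterS iterSr /Bop RL iter_BopB iter_BopZ.
by rewrite opprB addrA addrAC.
Qed.

Lemma inKrylov_sub_iter_Bop L n : R L = G -> K n (L - iter n T L).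
Proof.
move/SLD_sub_iter_Bop ->; apply: inKrylovZ; first exact: realn.
elim/big_ind: _ => [|X Y|m _]; [exact: inKrylov0 | exact: inKrylovD |].
exact: inKrylov_le (ltn_ord m) (inKrylov_iter_Bop m).
Qed.

Hypotheses (rho_selfadj : rho^t* = rho) (H_selfadj : H^t* = H).

Lemma Rop_selfadj X : X^t* = X -> (R X)^t* = R X.
Proof.
move=> XE; rewrite /Rop trmxC_scale_real ?realV ?realn //.
by rewrite linearD /= map_mxD !trmx_mul !map_mxM rho_selfadj XE addrC.
Qed.

Lemma icomm_selfadj : G^t* = G.
Proof.
rewrite /icomm linearZ /= map_mxZ linearB /= map_mxB !trmx_mul !map_mxM.
by rewrite rho_selfadj H_selfadj conjCi scaleNr -scalerN opprB.
Qed.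

Lemma Krylov_selfadj m X : K m X -> X^t* = X.
Proof.
move=> [c [cR ->]]; elim/big_ind: _ => [|Y Z YE ZE|k _].
- by rewrite linear0 /= map_mx0.
- by rewrite linearD /= map_mxD YE ZE.
rewrite trmxC_scale_real //; congr (_ *: _).
by elim: (k : nat) => [|j IH] /=; [exact: icomm_selfadj | exact: Rop_selfadj].
Qed.

End Krylov.

(* Also at s = 0, where both sides vanish because 0^-1 = 0. *)
Lemma half_mul_pair (C : numFieldType) (s x y : C) :
  s / 2 * (x * y) = 2 / s * ((s / 2 * x) * (s / 2 * y)).
Proof.
have [->|s0] := eqVneq s 0; first by rewrite !(mul0r, invr0, mulr0).
by field.
Qed.

Lemma geometric_pair (C : fieldType) (s w : C) N : (s = 0 -> w = 0) ->
  w ^+ 2 / s - w ^+ 2 * \sum_(j < N) (1 - s) ^+ j = (1 - s) ^+ N * (w ^+ 2 / s).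
Proof.
have [-> /(_ erefl) ->|s0 _] := eqVneq s 0.
  by rewrite expr0n /= !mul0r subrr mulr0.
have sumE : \sum_(j < N) (1 - s) ^+ j = (1 - (1 - s) ^+ N) / s.
  apply: (mulIf s0); rewrite divfK //.
  have := subrX1 (1 - s) N; rewrite addrAC subrr add0r mulNr => /eqP.
  by rewrite -opprB eqr_opp mulrC => /eqP <-.
by rewrite sumE; field.
Qed.

Lemma ipr_pythagoras (C : numClosedFieldType) d (rho X Y : 'M[C]_d) :
  ipr rho X Y = 0 -> ipr rho (X + Y) (X + Y) = ipr rho X X + ipr rho Y Y.
Proof.
move=> XY0.
suff -> : ipr rho (X + Y) (X + Y) = ipr rho X X + ipr rho Y Y + 2 * ipr rho X Y.
  by rewrite XY0 mulr0 addr0.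
by rewrite /ipr !(mulmxDl, mulmxDr, mxtraceD); ring.
Qed.

Section Eigenbasis.
Variables (C : numClosedFieldType) (d : nat) (rho H U : 'M[C]_d) (p : 'I_d -> C).
Hypotheses (rho_density : density_matrix rho) (H_herm : is_hermitian H)
  (rho_spec : spectral_decomposition rho U p).
Local Notation D := (diag_mx (\row_k p k)).
Local Notation uc := (uconj U).

Lemma spectral_unitary : U \is unitarymx.
Proof. by case: rho_spec. Qed.

Lemma uconj_spectral : uc rho = D.
Proof.
case: rho_spec => uU [_ ->].
by rewrite /uconj !mulmxA (unitarymxP uU) mul1mx -mulmxA (unitarymxP uU) mulmx1.
Qed.

Lemma eigenvalue_ge0 k : 0 <= p k.
Proof.
have := rho_density.2.1 (row k U).
suff -> : (row k U *m rho *m (row k U)^t*) 0 0 = uc rho k k.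
  by rewrite uconj_spectral !mxE eqxx mulr1n.
by rewrite /uconj -row_mul !mxE; apply: eq_bigr => j _; rewrite !mxE.
Qed.

Lemma ipr_eigenE X Y :
  ipr rho X Y = \sum_k \sum_l (p k + p l) / 2 * (uc X k l * uc Y l k).
Proof. by rewrite -(uconj_ipr spectral_unitary) uconj_spectral ipr_diagE. Qed.

Lemma ipr_selfadj_ge0 X : X^t* = X -> 0 <= ipr rho X X.
Proof.
move=> /(uconj_selfadj U) XE; rewrite ipr_eigenE.
apply: sumr_ge0 => k _; apply: sumr_ge0 => l _.
rewrite (selfadj_entry k l XE) -normCK mulr_ge0 ?exprn_ge0 //.
by rewrite divr_ge0 ?addr_ge0 ?eigenvalue_ge0.
Qed.

(* The pairs excluded from the sum defining [FQ] contribute 0 anyway, since x / 0 = 0. *)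
Lemma FQ_pairs : FQ U p H =
  2 * \sum_k \sum_l ((p k - p l) ^+ 2 / (p k + p l) * `|uc H k l| ^+ 2).
Proof.
rewrite /FQ; congr (_ * _); apply: eq_bigr => k _; rewrite big_mkcond.
apply: eq_bigr => l _ /=; case: ifPn => // s_le0.
suff -> : p k + p l = 0 by rewrite invr0 mulr0 mul0r.
by apply/eqP; move: s_le0; rewrite lt0r addr_ge0 ?eigenvalue_ge0 // andbT negbK.
Qed.

Variable (L : 'M[C]_d).
Hypothesis L_SLD : is_SLD U p rho H L.

Lemma SLD_entry k l : (p k + p l) / 2 * uc L k l = 'i * (p k - p l) * uc H k l.
Proof.
rewrite -Rop_diagE -icomm_diagE -uconj_spectral.
by rewrite -(uconj_Rop spectral_unitary) -(uconj_icomm spectral_unitary) L_SLD.2.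
Qed.

Lemma SLD_pair k l : (p k + p l) / 2 * (uc L k l * uc L l k) =
  2 * ((p k - p l) ^+ 2 / (p k + p l) * `|uc H k l| ^+ 2).
Proof.
have HE := uconj_selfadj U (hermsymmx_selfadj H_herm).
have Elk := SLD_entry l k; rewrite [p l + p k]addrC -[p l - p k]opprB in Elk.
rewrite half_mul_pair SLD_entry Elk (selfadj_entry k l HE) normCK.
have -> : 'i * (p k - p l) * uc H k l * ('i * - (p k - p l) * (uc H k l)^*) =
  - 'i ^+ 2 * ((p k - p l) ^+ 2 * (uc H k l * (uc H k l)^*)) by ring.
by rewrite sqrCi opprK mul1r; ring.
Qed.

Lemma FQ_ipr : FQ U p H = ipr rho L L.
Proof.
rewrite FQ_pairs ipr_eigenE mulr_sumr; apply: eq_bigr => k _.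
by rewrite mulr_sumr; apply: eq_bigr => l _; rewrite SLD_pair.
Qed.

Lemma FQ_sub_BTay n : (0 < n)%N ->
  FQ U p H - BTay rho H (2 * n - 1) =
    ipr rho (iter n (Bop rho) L) (iter n (Bop rho) L).
Proof.
move=> n_gt0; have HE := uconj_selfadj U (hermsymmx_selfadj H_herm).
rewrite -(BTay_uconj _ _ _ spectral_unitary) uconj_spectral BTay_diag FQ_pairs.
rewrite -mulrBr -sumrB ipr_eigenE mulr_sumr; apply: eq_bigr => k _.
rewrite -sumrB mulr_sumr; apply: eq_bigr => l _.
rewrite !(uconj_iter_Bop spectral_unitary) uconj_spectral !iter_Bop_diagE.
have NE : (2 * n - 1).+1 = (n + n)%N by rewrite subn1 prednK ?muln_gt0 // mul2n addnn.
have kE : 1 - p k - p l = 1 - (p k + p l) by rewrite opprD addrA.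
have lE : 1 - p l - p k = 1 - (p k + p l) by rewrite addrAC kE.
have w0 : p k + p l = 0 -> p k - p l = 0.
  move/eqP; rewrite paddr_eq0 ?eigenvalue_ge0 // => /andP[/eqP-> /eqP->].
  exact: subrr.
rewrite NE kE lE (selfadj_entry k l HE) -normCKC -mulrBl geometric_pair //.
transitivity ((1 - (p k + p l)) ^+ (n + n) *
                ((p k + p l) / 2 * (uc L k l * uc L l k))).
  by rewrite SLD_pair; ring.
by rewrite exprD; ring.
Qed.

End Eigenbasis.

Theorem theorem2 (C : numClosedFieldType) (d : nat)
  (rho H U : 'M[C]_d) (p : 'I_d -> C) (L : 'M[C]_d) (n : nat) (Ln : 'M[C]_d) :
  density_matrix rho ->
  is_hermitian H ->
  spectral_decomposition rho U p ->
  0 < FQ U p H ->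
  is_SLD U p rho H L ->
  (0 < n)%N ->
  is_Krylov_proj n rho H L Ln ->
  `|BKry rho Ln - FQ U p H| / FQ U p H
    <= `|BTay rho H (2 * n - 1) - FQ U p H| / FQ U p H.
Proof.
move=> rho_dens H_herm rho_spec FQ_gt0 L_SLD n_gt0 [Ln_Kry Ln_orth].
have selfadj := Krylov_selfadj (hermsymmx_selfadj rho_dens.1) (hermsymmx_selfadj H_herm).
pose Y := L - iter n (Bop rho) L.
have LnY_Kry : inKrylov n rho H (Ln - Y).
  exact: inKrylovB Ln_Kry (inKrylov_sub_iter_Bop n L_SLD.2).
have res_selfadj : (L - Ln)^t* = L - Ln.
  by rewrite linearB /= map_mxB (hermsymmx_selfadj L_SLD.1.1) (selfadj _ _ Ln_Kry).
have Kry_gap : FQ U p H - BKry rho Ln = ipr rho (L - Ln) (L - Ln).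
  have LE : L = (L - Ln) + Ln by rewrite subrK.
  rewrite (FQ_ipr rho_dens H_herm rho_spec L_SLD) {1 2}LE /BKry.
  by rewrite ipr_pythagoras ?addrK // Ln_orth.
have Tay_gap : FQ U p H - BTay rho H (2 * n - 1) =
    ipr rho (L - Ln) (L - Ln) + ipr rho (Ln - Y) (Ln - Y).
  rewrite (FQ_sub_BTay rho_dens H_herm rho_spec L_SLD n_gt0).
  have -> : iter n (Bop rho) L = (L - Ln) + (Ln - Y).
    by rewrite /Y opprB addrA subrK addrC subrK.
  by rewrite ipr_pythagoras // Ln_orth.
have res_ge0 := ipr_selfadj_ge0 rho_dens rho_spec res_selfadj.
have LnY_ge0 := ipr_selfadj_ge0 rho_dens rho_spec (selfadj _ _ LnY_Kry).
rewrite -!(distrC (FQ U p H)) Kry_gap Tay_gap !ger0_norm ?addr_ge0 //.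
apply: ler_wpM2r; first by rewrite invr_ge0 ltW.
by rewrite lerDl.
Qed.
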